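(* For a $K$-armed bandit with rewards $r\in\mathbb{R}^K$, a full-support policy $\pi$, and step size $\eta>0$, let $\pi'(i)=\pi(i)e^{\eta f_i}/Z$ with $Z=\mathbb{E}_\pi[e^{\eta f}]=\sum_{i}\pi(i)e^{\eta f_i}$. Then, with $V=\pi^\top r$ and $V'=\pi'^\top r$, \[ V'-V=\frac{\mathrm{Cov}_\pi(e^{\eta f},U)}{\mathbb{E}_\pi[e^{\eta f}]}=\frac1Z\sum_{i:\,U_i>0}\pi_iU_i\big(e^{\eta U_i}-1\big)\;\ge\;0. \]
   Context: $U_i:=r(i)-\pi^\top r$ is the advantage of arm $i$, $f_i:=U_i\mathbf{1}\{U_i>0\}$ is the gated advantage, $\pi_i:=\pi(i)$, and $\mathrm{Cov}_\pi$ denotes covariance under $i\sim\pi$. This is the discrete EG update. *)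

From mathcomp Require Import all_boot all_order all_algebra.
From mathcomp Require Import all_classical all_reals all_analysis.
Set Implicit Arguments. Unset Strict Implicit. Unset Printing Implicit Defensive.
Import Order.TTheory GRing.Theory Num.Theory.
Local Open Scope ring_scope.

Section Bandit.
Variables (R : realType) (K : nat).

Definition Epi (pi : 'I_K -> R) (X : 'I_K -> R) : R := \sum_i pi i * X i.

Definition Covpi (pi : 'I_K -> R) (X Y : 'I_K -> R) : R :=
  Epi pi (fun i => X i * Y i) - Epi pi X * Epi pi Y.

Definition value (pi r : 'I_K -> R) : R := \sum_i pi i * r i.

Definition adv (pi r : 'I_K -> R) (i : 'I_K) : R := r i - value pi r.

Definition gadv (pi r : 'I_K -> R) (i : 'I_K) : R :=
  if 0 < adv pi r i then adv pi r i else 0.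

Definition Znorm (pi r : 'I_K -> R) (eta : R) : R :=
  \sum_i pi i * expR (eta * gadv pi r i).

Definition eg_update (pi r : 'I_K -> R) (eta : R) (i : 'I_K) : R :=
  pi i * expR (eta * gadv pi r i) / Znorm pi r eta.

End Bandit.

From mathcomp Require Import all_boot all_order all_algebra.
From mathcomp Require Import all_classical all_reals all_analysis.
Set Implicit Arguments. Unset Strict Implicit. Unset Printing Implicit Defensive.
Import Order.TTheory GRing.Theory Num.Theory.
Local Open Scope ring_scope.

(* The advantage is centred, E_pi[U] = 0.  Hence the covariance is just
   E_pi[e^{eta f} U], and the gain of any reweighting pi(i) w_i / Z is
   E_pi[w U] / Z.  Subtracting E_pi[U] = 0 replaces e^{eta f} by
   e^{eta f} - 1, which vanishes where U <= 0 and is >= 0 where U > 0. *)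

Section Reweighting.
Variables (R : realType) (K : nat) (pi r : 'I_K -> R).

Lemma value_reweight_sub (w : 'I_K -> R) :
  Epi pi w != 0 ->
  value (fun i => pi i * w i / Epi pi w) r - value pi r
    = Epi pi (fun i => w i * adv pi r i) / Epi pi w.
Proof.
move=> Z_neq0; apply: (mulIf Z_neq0); rewrite divfK // mulrBl mulr_suml.
under eq_bigr => i _ do rewrite mulrAC divfK //.
rewrite /Epi /adv; under [RHS]eq_bigr => i _ do rewrite mulrA mulrBr.
by rewrite sumrB -mulr_suml mulrC.
Qed.

Hypothesis pi_sum1 : \sum_i pi i = 1.

Lemma Epi_adv : Epi pi (adv pi r) = 0.
Proof.
rewrite /Epi /adv; under eq_bigr => i _ do rewrite mulrBr.
by rewrite sumrB -mulr_suml pi_sum1 mul1r subrr.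
Qed.

Lemma Covpi_adv (X : 'I_K -> R) :
  Covpi pi X (adv pi r) = Epi pi (fun i => X i * adv pi r i).
Proof. by rewrite /Covpi Epi_adv mulr0 subr0. Qed.

Lemma Epi_adv_subr1 (w : 'I_K -> R) :
  Epi pi (fun i => w i * adv pi r i)
    = \sum_i pi i * adv pi r i * (w i - 1).
Proof.
under [RHS]eq_bigr => i _ do rewrite mulrBr mulr1.
have:= Epi_adv; rewrite sumrB /Epi => ->; rewrite subr0.
by apply: eq_bigr => i _; rewrite mulrA mulrAC.
Qed.

End Reweighting.

Section GatedAdvantage.
Variables (R : realType) (K : nat) (pi r : 'I_K -> R) (eta : R).

Lemma sum_gadv_exp_subr1 :
  \sum_i pi i * adv pi r i * (expR (eta * gadv pi r i) - 1)
    = \sum_(i | 0 < adv pi r i)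
        pi i * adv pi r i * (expR (eta * adv pi r i) - 1).
Proof.
rewrite [RHS]big_mkcond; apply: eq_bigr => i _; rewrite /gadv.
by case: ifP => // _; rewrite mulr0 expR0 subrr mulr0.
Qed.

Hypothesis eta_ge0 : 0 <= eta.

Lemma expR_gadv_ge1 i : 1 <= expR (eta * gadv pi r i).
Proof.
rewrite -expR0 ler_expR /gadv; case: ifP => [/ltW|_]; last by rewrite mulr0.
exact: mulr_ge0.
Qed.

Lemma Znorm_ge1 : (forall i, 0 <= pi i) -> \sum_i pi i = 1 ->
  1 <= Znorm pi r eta.
Proof.
move=> pi_ge0 pi_sum1; rewrite -pi_sum1; apply: ler_sum => i _.
by rewrite ler_peMr // expR_gadv_ge1.
Qed.

Lemma sum_gadv_exp_subr1_ge0 : (forall i, 0 <= pi i) ->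
  0 <= \sum_(i | 0 < adv pi r i)
         pi i * adv pi r i * (expR (eta * adv pi r i) - 1).
Proof.
move=> pi_ge0; apply: sumr_ge0 => i adv_gt0.
rewrite !mulr_ge0 ?(ltW adv_gt0) // subr_ge0 -expR0 ler_expR.
by rewrite mulr_ge0 ?(ltW adv_gt0).
Qed.

End GatedAdvantage.

Theorem lemma5 (R : realType) (K : nat) (r pi : 'I_K -> R) (eta : R)
  (hpos : forall i, 0 < pi i) (hsum : \sum_i pi i = 1) (heta : 0 < eta) :
  let V := value pi r in
  let V' := value (eg_update pi r eta) r in
  let Z := Znorm pi r eta in
  [/\ V' - V = Covpi pi (fun i => expR (eta * gadv pi r i)) (adv pi r)
                 / Epi pi (fun i => expR (eta * gadv pi r i)),
      V' - V = Z^-1 * \sum_(i | 0 < adv pi r i)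
                 pi i * adv pi r i * (expR (eta * adv pi r i) - 1)
    & 0 <= V' - V].
Proof.
move=> V V' Z; set w := fun i => expR (eta * gadv pi r i).
have pi_ge0 i : 0 <= pi i := ltW (hpos i).
have Z_gt0 : 0 < Z.
  by apply: lt_le_trans ltr01 _; apply: Znorm_ge1 => //; exact: ltW.
have gain : V' - V = Epi pi (fun i => w i * adv pi r i) / Epi pi w.
  change V' with (value (fun i => pi i * w i / Epi pi w) r).
  by rewrite value_reweight_sub // gt_eqF.
have gain_gated : V' - V = Z^-1 * \sum_(i | 0 < adv pi r i)
                 pi i * adv pi r i * (expR (eta * adv pi r i) - 1).
  by rewrite gain Epi_adv_subr1 // sum_gadv_exp_subr1 mulrC.
split=> //; first by rewrite Covpi_adv.
rewrite gain_gated; apply: mulr_ge0; first by rewrite invr_ge0 ltW.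
by apply: sum_gadv_exp_subr1_ge0 => //; exact: ltW.
Qed.
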